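(* Let $n \geq 2$, let $P_n$ be the path with $n$ vertices, and let $B_n$ be the barbell graph consisting of two disjoint cliques of sizes $\lceil n/2\rceil$ and $\lfloor n/2\rfloor$ connected by a single edge. Then $\mathcal{AC}(P_n) = \mathcal{AC}(B_n) = n-2$.
   Context: Acquaintance time: Let $G=(V,E)$ be a finite connected graph. Initially one agent is placed on each vertex. At any moment, two agents located at the endpoints of a common edge become acquainted (in particular, agents on adjacent vertices at the start are acquainted). In each round one chooses a matching of $G$ (not necessarily maximal), and for every edge of the matching the two agents on its endpoints swap places; after each round, all pairs of agents on adjacent vertices become acquainted. A sequence of matchings after which every pair of agents has been acquainted is a strategy for acquaintance in $G$. The acquaintance time $\mathcal{AC}(G)$ is the minimal number of rounds in a strategy for acquaintance in $G$. *)

From mathcomp Require Import all_boot.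
Set Implicit Arguments. Unset Strict Implicit. Unset Printing Implicit Defensive.

Definition simple_graph (T : finType) (e : rel T) : Prop :=
  irreflexive e /\ symmetric e.

(* A matching of the graph, encoded as the involution swapping the two
   endpoints of every matched edge and fixing unmatched vertices. *)
Definition is_matching (T : finType) (e : rel T) (m : T -> T) : Prop :=
  forall v, m (m v) = v /\ (m v = v \/ e v (m v)).

(* Agents are named by their initial vertex.  [pos s t a] is the vertex
   occupied by agent a after the first t rounds of the strategy s. *)
Definition pos (T : finType) (s : seq (T -> T)) (t : nat) (a : T) : T :=
  foldl (fun x m => m x) a (take t s).

Definition acquainted (T : finType) (e : rel T) (s : seq (T -> T)) (a b : T) : Prop :=
  exists t, t <= size s /\ e (pos s t a) (pos s t b).

Definition acq_strategy (T : finType) (e : rel T) (s : seq (T -> T)) : Prop :=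
  (forall i, i < size s -> is_matching e (nth id s i)) /\
  (forall a b : T, a != b -> acquainted e s a b).

Definition acq_time_is (T : finType) (e : rel T) (k : nat) : Prop :=
  (exists s, size s = k /\ acq_strategy e s) /\
  (forall s, acq_strategy e s -> k <= size s).

Definition path_graph (n : nat) : rel 'I_n :=
  fun i j => (i.+1 == j :> nat) || (j.+1 == i :> nat).

(* The barbell B_n: cliques on {0,..,c-1} and {c,..,n-1} where c = ceil(n/2),
   joined by the single edge {c-1, c}. *)
Definition barbell_graph (n : nat) : rel 'I_n :=
  fun i j =>
    let c := n - n./2 in
    ((i != j) && ((i < c) == (j < c)))
    || ((i == c.-1 :> nat) && (j == c :> nat))
    || ((j == c.-1 :> nat) && (i == c :> nat)).

Arguments path_graph n : clear implicits.
Arguments barbell_graph n : clear implicits.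

From mathcomp Require Import all_boot zify.
Set Implicit Arguments. Unset Strict Implicit. Unset Printing Implicit Defensive.

(* Cut the barbell into its cliques S and ~S, joined by the
   single edge u0 v0.  Call an agent native if it never left the side it
   started on ([kept]); a native of S and a native of ~S can only meet
   while standing on u0 and v0.  Let g be the larger of the numbers of
   agents that have left S and that have left ~S, and m the number of pairs
   of natives that have met on the bridge.  A round swapping across the
   bridge raises g by at most one and, if both endpoints held natives,
   destroys the pair standing there; any other round lets at most one new
   pair meet.  So 2g + m, plus one when exactly one endpoint holds a native
   ([potential]), grows by at most one per round.  At the end all a * b
   pairs of remaining natives have met, where a >= |S| - g and
   b >= |~S| - g.  If a, b > 0 then a + b <= a * b + 1, and if, say, a = 0
   then g >= |S|; as the two cliques differ in size by at most one, either
   way n - 2 rounds are needed.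
   Upper bound: odd-even transposition sort on the path makes every two
   agents adjacent within n - 2 rounds, and the path is a subgraph of the
   barbell. *)

Section Positions.
Variables (T : finType) (e : rel T) (s : seq (T -> T)).

Lemma pos0 a : pos s 0 a = a.
Proof. by rewrite /pos take0. Qed.

Lemma posS t a : t < size s -> pos s t.+1 a = nth id s t (pos s t a).
Proof. by move=> ht; rewrite /pos (take_nth id ht) foldl_rcons. Qed.

Hypothesis s_matching : forall i, i < size s -> is_matching e (nth id s i).

Lemma pos_inj t : t <= size s -> injective (pos s t).
Proof.
elim: t => [|t IHt] ht x y; first by rewrite !pos0.
have [invx _] := s_matching ht (pos s t x).
have [invy _] := s_matching ht (pos s t y).
by rewrite !posS // => hxy; apply: IHt (ltnW ht) _ _ _; rewrite -invx hxy invy.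
Qed.

End Positions.

Lemma acq_strategy_sub (T : finType) (e1 e2 : rel T) s :
  subrel e1 e2 -> acq_strategy e1 s -> acq_strategy e2 s.
Proof.
move=> e12 [s_match s_acq]; split=> [i hi v | a b ab].
  by have [inv [fix_v|/e12 ?]] := s_match i hi v; split=> //; [left|right].
by have [t [ht hab]] := s_acq a b ab; exists t; split; last exact: e12.
Qed.

Definition stays_in (T : finType) (s : seq (T -> T)) (X : {set T}) t x :=
  [forall j : 'I_t.+1, pos s j x \in X].
Definition kept (T : finType) (s : seq (T -> T)) (X : {set T}) t : {set T} :=
  [set x | stays_in s X t x].
Definition gone (T : finType) (s : seq (T -> T)) (X : {set T}) t : {set T} :=
  X :\: kept s X t.
Definition at_gate (T : finType) (s : seq (T -> T)) (X : {set T}) (z : T) t :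
  {set T} := [set x in kept s X t | pos s t x == z].

Section OneSide.
Variables (T : finType) (e : rel T) (s : seq (T -> T)).
Hypothesis s_matching : forall i, i < size s -> is_matching e (nth id s i).
Variables (X : {set T}) (z z' : T).
Hypothesis exit_only :
  forall m v, is_matching e m -> v \in X -> m v \notin X -> v = z /\ m v = z'.
Hypothesis z'_notin : z' \notin X.

Lemma staysP t x :
  reflect (forall j, j <= t -> pos s j x \in X) (stays_in s X t x).
Proof.
apply: (iffP forallP) => [h j hj | h j]; last exact: h _ (ltn_ord j).
exact: (h (Ordinal (hj : j < t.+1))).
Qed.

Lemma stays_pos t j x : stays_in s X t x -> j <= t -> pos s j x \in X.
Proof. by move/staysP; apply. Qed.

Lemma kept_sub t : kept s X t \subset X.
Proof.
by apply/subsetP => x; rewrite inE => /staysP /(_ 0 (leq0n t)); rewrite pos0.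
Qed.

Lemma kept0 : kept s X 0 = X.
Proof.
apply/eqP; rewrite eqEsubset kept_sub; apply/subsetP => x xX.
by rewrite inE; apply/staysP => j; rewrite leqn0 => /eqP ->; rewrite pos0.
Qed.

Lemma staysS t x :
  stays_in s X t.+1 x = stays_in s X t x && (pos s t.+1 x \in X).
Proof.
apply/staysP/andP => [h | [/staysP h hX] j].
  by split; [apply/staysP => j /leqW|]; apply: h.
by rewrite leq_eqVlt => /orP[/eqP -> // | /h].
Qed.

Lemma card_gone_kept t : #|gone s X t| + #|kept s X t| = #|X|.
Proof. by rewrite addnC -(cardsID (kept s X t) X) (setIidPr (kept_sub t)). Qed.

Lemma card_at_gate t : t <= size s -> #|at_gate s X z t| <= 1.
Proof.
move=> ht; apply/card_le1_eqP => x y.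
rewrite !inE => /andP[_ /eqP xz] /andP[_ /eqP yz].
by apply: (pos_inj s_matching ht); rewrite xz yz.
Qed.

Lemma matching_keeps_side m v :
  is_matching e m -> m z != z' -> (m v \in X) = (v \in X).
Proof.
move=> m_match mz; have inv_m v' : m (m v') = v' by have [] := m_match v'.
apply/idP/idP => [mvX | vX]; apply: contraNT mz => notX.
  by move: notX; rewrite -{1}(inv_m v) => /(exit_only m_match mvX) [<- <-].
by have [<- ->] := exit_only m_match vX notX.
Qed.

Lemma kept_no_crossing t : t < size s -> nth id s t z != z' ->
  kept s X t.+1 = kept s X t.
Proof.
move=> ht no_crossing; apply/setP => x; rewrite !inE staysS posS //.
rewrite (matching_keeps_side _ (s_matching ht)) //.
by apply/andb_idr => /staysP; apply.
Qed.

Lemma card_gone_step t : t < size s ->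
  #|gone s X t.+1| <= #|gone s X t| + #|at_gate s X z t|.
Proof.
move=> ht; apply: leq_trans (leq_card_setU _ _); apply: subset_leq_card.
apply/subsetP => x; rewrite !inE staysS posS // negb_and.
case/andP=> /orP[->|out] xX; first by rewrite xX.
case kx: (stays_in s X t x); rewrite ?xX //=.
have [hz _] := exit_only (s_matching ht) (stays_pos kx (leqnn t)) out.
by rewrite hz eqxx.
Qed.

Section CrossingRound.
Variable t : nat.
Hypotheses (ht : t < size s) (crossing : nth id s t z = z').

Lemma at_gate_crossing : at_gate s X z t.+1 = set0.
Proof.
apply/setP => x; rewrite !inE staysS posS //.
apply/negP => /andP[/andP[kx _] /eqP hz].
have [inv _] := s_matching ht (pos s t x).
by move: (stays_pos kx (leqnn t)); rewrite -inv hz crossing (negPf z'_notin).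
Qed.

Lemma at_gate_crossing_leaves x :
  x \in at_gate s X z t -> x \notin kept s X t.+1.
Proof.
rewrite !inE staysS posS // => /andP[_ /eqP ->].
by rewrite crossing (negPf z'_notin) andbF.
Qed.

End CrossingRound.
End OneSide.

Section SingleBridge.
Variables (T : finType) (e : rel T) (S : {set T}) (u0 v0 : T).
Hypothesis bridge_only :
  forall x y, x \in S -> y \notin S -> e x y || e y x -> x = u0 /\ y = v0.
Hypotheses (u0_in : u0 \in S) (v0_notin : v0 \notin S).

Lemma exit_left m v :
  is_matching e m -> v \in S -> m v \notin S -> v = u0 /\ m v = v0.
Proof.
move=> m_match vS mvS; have [_ [fix_v|evm]] := m_match v.
  by move: mvS; rewrite fix_v vS.
by apply: bridge_only => //; rewrite evm.
Qed.

Lemma exit_right m v :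
  is_matching e m -> v \in ~: S -> m v \notin ~: S -> v = v0 /\ m v = u0.
Proof.
rewrite !inE negbK => m_match vS mvS; have [_ [fix_v|evm]] := m_match v.
  by move: mvS; rewrite fix_v (negPf vS).
by have [] := bridge_only mvS vS; [rewrite evm orbT|split].
Qed.

Variables (s : seq (T -> T)).
Hypothesis s_matching : forall i, i < size s -> is_matching e (nth id s i).

Local Notation gate_in t := (at_gate s S u0 t).
Local Notation gate_out t := (at_gate s (~: S) v0 t).

Definition met_at_bridge t : {set T * T} :=
  [set xy in setX (kept s S t) (kept s (~: S) t) |
     [exists j : 'I_t.+1, (pos s j xy.1 == u0) && (pos s j xy.2 == v0)]].

Lemma gates_met t : setX (gate_in t) (gate_out t) \subset met_at_bridge t.
Proof.
apply/subsetP => -[x y]; rewrite !inE /=.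
case/andP=> /andP[kx /eqP xu] /andP[ky /eqP yv].
by rewrite kx ky; apply/existsP; exists ord_max; rewrite xu yv !eqxx.
Qed.

Lemma met_at_bridge0 : met_at_bridge 0 \subset setX (gate_in 0) (gate_out 0).
Proof.
apply/subsetP => -[x y]; rewrite !inE /= => /andP[/andP[kx ky] /existsP[j]].
by rewrite (ord1 j) kx ky.
Qed.

Lemma met_at_bridgeS t xy : xy \in met_at_bridge t.+1 ->
  xy \in met_at_bridge t \/ xy \in setX (gate_in t.+1) (gate_out t.+1).
Proof.
case: xy => x y; rewrite !inE /=.
case/andP=> /andP[kx ky] /existsP[j /andP[xu yv]].
have [jt | jt] := ltnP j t.+1.
  left; move: kx ky; rewrite !staysS => /andP[-> _] /andP[-> _] /=.
  by apply/existsP; exists (Ordinal jt); rewrite xu yv.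
have jE : j = ord_max by apply: val_inj; have := ltn_ord j; rewrite /=; lia.
right; rewrite jE in xu yv.
by rewrite kx ky xu yv.
Qed.

Lemma card_met_at_bridgeS t :
  #|met_at_bridge t.+1| <=
  #|met_at_bridge t| + #|gate_in t.+1| * #|gate_out t.+1|.
Proof.
rewrite -cardsX; apply: leq_trans (leq_card_setU _ _); apply: subset_leq_card.
by apply/subsetP => xy /met_at_bridgeS[] xy_in; rewrite in_setU xy_in ?orbT.
Qed.

Section CrossingRound.
Variable t : nat.
Hypotheses (ht : t < size s) (crossing : nth id s t u0 = v0).

Lemma card_met_at_bridge_crossing :
  #|met_at_bridge t.+1| + #|gate_in t| * #|gate_out t| <= #|met_at_bridge t|.
Proof.
have sub : met_at_bridge t.+1 \subset
            met_at_bridge t :\: setX (gate_in t) (gate_out t).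
  apply/subsetP => -[x y] xy_met; have [xy_old | ] := met_at_bridgeS xy_met.
    rewrite in_setD xy_old andbT in_setX negb_and; apply/orP; left.
    apply: contraL xy_met => /(at_gate_crossing_leaves v0_notin ht crossing).
    by rewrite !inE /= => /negPf ->.
  by rewrite (at_gate_crossing s_matching v0_notin ht crossing) in_setX in_set0.
have := subset_leq_card sub; rewrite cardsDS ?gates_met // -cardsX.
have := subset_leq_card (gates_met t).
by move=> h1 h2; rewrite addnC -leq_subRL.
Qed.

End CrossingRound.

Definition potential t :=
  (maxn #|gone s S t| #|gone s (~: S) t|).*2 + #|met_at_bridge t| +
  (#|gate_in t| + #|gate_out t| == 1).

Lemma gate_pair_le1 a b : a <= 1 -> b <= 1 -> a * b + (a + b == 1) <= 1.
Proof. by case: a b => [|[|]] // [|[|]]. Qed.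

Lemma potential0 : potential 0 <= 1.
Proof.
rewrite /potential /gone !kept0 !setDv cards0 /=.
apply: leq_trans (gate_pair_le1 (card_at_gate s_matching S u0 (leq0n _))
                                (card_at_gate s_matching (~: S) v0 (leq0n _))).
by rewrite leq_add2r -cardsX subset_leq_card ?met_at_bridge0.
Qed.

Lemma potentialS t : t < size s -> potential t.+1 <= (potential t).+1.
Proof.
move=> ht; rewrite /potential.
have inv : involutive (nth id s t) by move=> v; have [] := s_matching ht v.
have back : (nth id s t v0 == u0) = (nth id s t u0 == v0).
  by rewrite (inv_eq inv) eq_sym.
have [crossing | no_crossing] := eqVneq (nth id s t u0) v0.
  have crossing' : nth id s t v0 = u0 by apply/eqP; rewrite back crossing.
  rewrite (at_gate_crossing s_matching v0_notin ht crossing).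
  rewrite (at_gate_crossing s_matching _ ht crossing') ?inE ?negbK //.
  have gi := card_at_gate s_matching S u0 (ltnW ht).
  have go := card_at_gate s_matching (~: S) v0 (ltnW ht).
  have gl := card_gone_step s_matching exit_left ht.
  have gr := card_gone_step s_matching exit_right ht.
  have := card_met_at_bridge_crossing ht crossing.
  move: gi go gl gr; rewrite !cards0 /=; nia.
rewrite /gone (kept_no_crossing s_matching exit_left ht no_crossing).
rewrite (kept_no_crossing s_matching exit_right ht) ?back //.
have := card_met_at_bridgeS t.
have := gate_pair_le1 (card_at_gate s_matching S u0 ht)
                      (card_at_gate s_matching (~: S) v0 ht).
lia.
Qed.

Lemma potential_le t : t <= size s -> potential t <= t.+1.
Proof.
elim: t => [|t IHt] ht; first exact: potential0.
by apply: leq_trans (potentialS ht) _; rewrite ltnS IHt // ltnW.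
Qed.

Hypothesis s_acquaints : forall a b, a != b -> acquainted e s a b.

Lemma met_at_bridge_all :
  met_at_bridge (size s) = setX (kept s S (size s)) (kept s (~: S) (size s)).
Proof.
apply/setP => -[x y]; rewrite !inE /=; apply/andb_idr => /andP[kx ky].
have xS := stays_pos kx (leq0n _); have yS := stays_pos ky (leq0n _).
rewrite !pos0 inE in xS yS.
have xy : x != y by apply: contraNneq yS => <-.
have [t [tL ext]] := s_acquaints xy.
have ty : pos s t y \notin S by have := stays_pos ky tL; rewrite inE.
have := bridge_only (stays_pos kx tL) ty; rewrite ext => /(_ isT) [xu yv].
by apply/existsP; exists (Ordinal (tL : t < (size s).+1)); rewrite xu yv !eqxx.
Qed.

Lemma bridge_size_strategy_ge :
  #|S| <= #|~: S|.+1 -> #|~: S| <= #|S|.+1 -> #|T| - 2 <= size s.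
Proof.
move=> balS balC; have := potential_le (leqnn (size s)).
rewrite /potential met_at_bridge_all cardsX -(cardsC S).
have := card_gone_kept s S (size s); have := card_gone_kept s (~: S) (size s).
move: (_ == 1) => b; nia.
Qed.

End SingleBridge.

Lemma path_sub_barbell n : subrel (path_graph n) (barbell_graph n).
Proof. move=> u v; rewrite /path_graph /barbell_graph -!val_eqE /=; lia. Qed.

Lemma card_ord_lt n k : k <= n -> #|[set i : 'I_n | i < k]| = k.
Proof.
move=> kn; rewrite -sum1_card (eq_bigl (fun i : 'I_n => i < k)) => [|i].
  by rewrite (big_ord_narrow kn) sum1_card card_ord.
by rewrite inE.
Qed.

Section Barbell.
Variable n : nat.
Hypothesis n_ge2 : 2 <= n.

Local Notation c := (n - n./2).
Let c_lt : c < n. Proof. lia. Qed.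
Let left_end : 'I_n := Ordinal (leq_ltn_trans (leq_pred c) c_lt).
Let right_end : 'I_n := Ordinal c_lt.
Let first_clique := [set i : 'I_n | i < c].

Lemma barbell_bridge_only x y : x \in first_clique -> y \notin first_clique ->
  barbell_graph n x y || barbell_graph n y x -> x = left_end /\ y = right_end.
Proof.
rewrite !inE /barbell_graph => xc yc hxy.
by split; apply: val_inj => /=; move: hxy; rewrite -!val_eqE /=; lia.
Qed.

Lemma barbell_size_strategy_ge s :
  acq_strategy (barbell_graph n) s -> n - 2 <= size s.
Proof.
case=> s_matching s_acquaints.
have card_first : #|first_clique| = c by rewrite card_ord_lt // ltnW.
have card_second : #|~: first_clique| = n./2.
  by have := cardsC first_clique; rewrite card_ord card_first; lia.
rewrite -{1}(card_ord n).
apply: (bridge_size_strategy_ge barbell_bridge_only) => //;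
  rewrite ?inE ?card_first ?card_second /=; lia.
Qed.

End Barbell.

(* [oet]: odd-even transposition sort, where the parity of [v + t] decides
   whether vertex [v] is matched leftwards or rightwards in round [t]. *)
Definition oet_partner n t v := if odd (v + t) then v.-1 else minn v.+1 n.-1.

Definition oet_round n t (v : 'I_n) : 'I_n := insubd v (oet_partner n t v).
Arguments oet_round : clear implicits.

Definition oet_strategy n := mkseq (oet_round n) (n - 2).

Lemma oet_partner_lt n t v : v < n -> oet_partner n t v < n.
Proof. by rewrite /oet_partner; case: ifP; lia. Qed.

Lemma oet_roundE n t v : oet_round n t v = oet_partner n t v :> nat.
Proof. by rewrite val_insubd oet_partner_lt. Qed.

Lemma oet_round_matching n t : is_matching (path_graph n) (oet_round n t).
Proof.
move=> v; split.
  apply: val_inj => /=; rewrite !oet_roundE /oet_partner.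
  by case: v => v /= vn; case: ifP; case: ifP; lia.
have [|moved] := eqVneq (oet_round n t v) v; [by left | right].
move: moved; rewrite /path_graph -!val_eqE /= !oet_roundE /oet_partner.
by case: v => v /= vn; case: ifP; lia.
Qed.

(* Agents starting on an even vertex walk right, those starting on an odd
   vertex walk left; each waits one round at the end of the path and turns. *)
Definition oet_pos n t a :=
  if odd a then (if t <= a then a - t else t - a.+1)
  else (if a + t < n then a + t else n.*2 - (a + t).+1).

Lemma oet_posS n t a : t < n - 2 -> a < n ->
  oet_partner n t (oet_pos n t a) = oet_pos n t.+1 a.
Proof.
move=> tn an; rewrite /oet_partner /oet_pos; case: (boolP (odd a)) => oa.
  by case: (leqP t a); case: (leqP t.+1 a); case: ifP; lia.
by case: (ltnP (a + t) n); case: (ltnP (a + t.+1) n); case: ifP; lia.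
Qed.

Lemma pos_oet_strategy n t (a : 'I_n) :
  t <= n - 2 -> pos (oet_strategy n) t a = oet_pos n t a :> nat.
Proof.
elim: t => [|t IHt] tn.
  by rewrite pos0 /oet_pos addn0 subn0 ltn_ord leq0n; case: odd.
rewrite posS ?size_mkseq // nth_mkseq // oet_roundE IHt 1?ltnW //.
exact: oet_posS tn (ltn_ord a).
Qed.

Lemma oet_pos_meet n a b : a < b < n ->
  exists2 t, t <= n - 2 & (oet_pos n t a).+1 = oet_pos n t b.
Proof.
case/andP=> ab bn; rewrite /oet_pos.
case: (boolP (odd a)) => oa; case: (boolP (odd b)) => ob;
  rewrite ?oa ?ob ?(negPf oa) ?(negPf ob).
- by exists (a./2 + b./2).+1; [lia | repeat case: ifP; lia].
- have [b_eq|ab1] := eqVneq b a.+1.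
    by exists 0; [lia | rewrite leq0n; case: ifP; lia].
  by exists (n - b./2 + a./2); [lia | repeat case: ifP; lia].
- by exists (b./2 - a./2); [lia | repeat case: ifP; lia].
- by exists (n.-1 - a./2 - b./2); [lia | repeat case: ifP; lia].
Qed.

Lemma oet_strategy_acq n : acq_strategy (path_graph n) (oet_strategy n).
Proof.
split=> [i | ].
  by rewrite size_mkseq => i_lt; rewrite nth_mkseq //; apply: oet_round_matching.
have meet (a b : 'I_n) :
    a < b -> acquainted (path_graph n) (oet_strategy n) a b.
  move=> ab; have [|t tn hmeet] := @oet_pos_meet n a b; first by rewrite ab /=.
  exists t; rewrite size_mkseq; split=> //.
  by rewrite /path_graph !pos_oet_strategy // hmeet eqxx.
move=> a b; case: (ltngtP a b) => [/meet // | /meet [t [tn hba]] _ | /val_inj ->].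
  by exists t; split; last by rewrite /path_graph orbC.
by rewrite eqxx.
Qed.

Theorem theorem3p1 (n : nat) (hn : 2 <= n) :
  acq_time_is (path_graph n) (n - 2) /\ acq_time_is (barbell_graph n) (n - 2).
Proof.
have size_oet : size (oet_strategy n) = n - 2 by rewrite size_mkseq.
have path_in_barbell := acq_strategy_sub (@path_sub_barbell n).
split; split.
- by exists (oet_strategy n); split; last exact: oet_strategy_acq.
- by move=> s /path_in_barbell; apply: barbell_size_strategy_ge.
- exists (oet_strategy n); split=> //.
  exact/path_in_barbell/oet_strategy_acq.
- exact: barbell_size_strategy_ge.
Qed.
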